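(* For any $t\in \mathbb{T}_n$, denote the value of the $(1,n)$ entry of its matrix format $\hat{t}$ as $\hat{t}_{1,n}$, and let $J_n$ be the $(n\times n)$ exchange matrix (entries $1$ on the antidiagonal, $0$ elsewhere). Then $\frac{1}{\hat{t}_{1,n}}\hat{t}\, J_n$ is a normalized uncurling metric of $\mathbb{T}_n$ if $\hat{t}_{1,n}\ne 0$, and all normalized uncurling metrics of $\mathbb{T}_n$ can be written in this form for some $t\in \mathbb{T}_n$.
   Context: $\mathbb{T}_n$ is the $n$-dimensional real unital algebra (usual matrix product) of real upper triangular Toeplitz $(n\times n)$-matrices, with elements $s=(x_1,\dots,x_n)$ giving the constant values on the successive diagonals starting from the main diagonal; its identity is $\mathbf{1}=(1,0,\dots,0)$, so $\|\mathbf{1}\|^2=\mathbf{1}\cdot\mathbf{1}=1$. An uncurling metric is a real symmetric $(n\times n)$-matrix $L$ satisfying $d\big((s^{-1})^T L\,\mathbf{d}s\big)=0$ on an open ball of units centered at $\mathbf{1}$ (with $\mathbf{d}s=(dx_1,\dots,dx_n)^T$ and $d$ the exterior derivative). A normalized uncurling metric is an uncurling metric $L$ that additionally satisfies $s^T L s^{-1}=\|\mathbf{1}\|^2$ on a sufficiently small neighborhood of $\mathbf{1}$. It is known that every uncurling metric of $\mathbb{T}_n$ has the form $\hat t J_n$ for some $t\in\mathbb{T}_n$. *)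

From HB Require Import structures.
From mathcomp Require Import all_boot all_order all_algebra.
From mathcomp Require Import all_classical all_reals topology normedtype derive.
Set Implicit Arguments. Unset Strict Implicit. Unset Printing Implicit Defensive.
Import Order.TTheory GRing.Theory Num.Theory.
Import numFieldNormedType.Exports.
Local Open Scope ring_scope.

Section Toeplitz.
Variables (R : realType) (n : nat).
(* Elements s = (x_1,...,x_{n+1}) of T_{n+1}, as column vectors (0-indexed). *)
Notation V := 'cV[R]_n.+1.

(* matrix format \hat s : entry (i,j) is x_{j-i+1} if j >= i, 0 otherwise *)
Definition hat (s : V) : 'M[R]_n.+1 :=
  \matrix_(i, j) \sum_(k < n.+1 | (i + k == j)%N) s k 0.

Definition tone : V := delta_mx 0 0.

Definition tunit (s : V) : bool := hat s \in unitmx.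

Definition tinv (s : V) : V := (row 0 (invmx (hat s)))^T.

Definition exchange : 'M[R]_n.+1 := \matrix_(i, j) ((i + j == n)%N)%:R.

(* coefficient of dx_j in the 1-form (s^{-1})^T L ds *)
Definition form_coef (L : 'M[R]_n.+1) (j : 'I_n.+1) (s : V) : R :=
  ((tinv s)^T *m L) 0 j.

(* d((s^{-1})^T L ds) = 0 at s : the exterior derivative of the 1-form
   sum_j a_j dx_j vanishes iff  d a_j / d x_k = d a_k / d x_j  for all j,k *)
Definition closed_at (L : 'M[R]_n.+1) (s : V) : Prop :=
  forall j k : 'I_n.+1,
    'D_(delta_mx k 0) (form_coef L j) s = 'D_(delta_mx j 0) (form_coef L k) s.

Definition uncurling (L : 'M[R]_n.+1) : Prop :=
  L^T = L /\
  exists r : R, 0 < r /\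
    (forall s : V, ball tone r s -> tunit s) /\
    (forall s : V, ball tone r s -> closed_at L s).

Definition normalized_uncurling (L : 'M[R]_n.+1) : Prop :=
  uncurling L /\
  \forall s \near tone, (s^T *m L *m tinv s) 0 0 = (tone^T *m tone) 0 0.

End Toeplitz.

From HB Require Import structures.
From mathcomp Require Import all_boot all_order all_algebra.
From mathcomp Require Import all_classical all_reals topology normedtype derive.
From mathcomp Require Import zify lra.
Set Implicit Arguments. Unset Strict Implicit. Unset Printing Implicit Defensive.
Import Order.TTheory GRing.Theory Num.Theory.
Import numFieldNormedType.Exports.
Local Open Scope classical_set_scope.
Local Open Scope ring_scope.

(* The coefficients of the 1-form (s^-1)^T L ds form row 0 of U L, where U is
   the inverse of \hat s.  Differentiating U with the resolvent identity, and
   using that upper triangular Toeplitz matrices commute, gives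
   d_k (U L)_0j = -(U^2 L)_kj, so L is uncurling exactly when U^2 L is
   symmetric near 1.  Toeplitz matrices are persymmetric (X J = J X^T), which
   makes U^2 \hat t J symmetric and settles the first half.  Conversely,
   symmetry at s = 1 + h e_2 and s = 1 - h e_2 forces N L = L N^T for the shift
   N = \hat e_2; then L J commutes with N, hence is Toeplitz, L = \hat t J, and
   the normalization at s = 1 gives L_11 = 1, the (1,n) entry of \hat t. *)

Section InverseAlongLine.
Variables (R : realType) (m : nat) (A B : 'M[R]_m).
Hypothesis unitA : A \in unitmx.

(* Where [p] does not vanish, the entries of [invmx (h *: B + A)] are those of
   [\adj P] divided by [p], evaluated at [h]: they are rational in [h]. *)
Let P : 'M[{poly R}]_m := \matrix_(a, b) ((A a b)%:P + 'X * (B a b)%:P).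
Let p := \det P.

Let horner_P h : map_mx (horner_eval h) P = h *: B + A.
Proof. by apply/matrixP => a b; rewrite !mxE /= horner_evalE !hornerE addrC mulrC. Qed.

Let horner_p h : p.[h] = \det (h *: B + A).
Proof. by rewrite -horner_P det_map_mx. Qed.

Let line_unitmx h : (h *: B + A \in unitmx) = (p.[h] != 0).
Proof. by rewrite unitmxE unitfE horner_p. Qed.

Lemma near0_line_unitmx : \forall h \near 0, h *: B + A \in unitmx.
Proof.
have p0 : p.[0] != 0 by rewrite -line_unitmx scale0r add0r.
near=> h; rewrite line_unitmx; near: h.
apply: (@cvgr_neq0 _ _ _ _ _ (horner p) p.[0]) => //; exact: continuous_horner.
Unshelve. all: by end_near.
Qed.

Lemma cvg_invmx_line m' (C : 'M[R]_(m, m')) i j :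
  (invmx (h *: B + A) *m C) i j @[h --> 0] --> (invmx A *m C) i j.
Proof.
pose r := \sum_k \adj P i k * (C k j)%:P.
have invE h : h *: B + A \in unitmx ->
    (invmx (h *: B + A) *m C) i j = p.[h]^-1 * r.[h].
  move=> u; rewrite /invmx u -horner_p -scalemxAl mxE mxE.
  congr (_ * _); rewrite horner_sum; apply: eq_bigr => k _.
  by rewrite hornerM hornerC -horner_P -map_mx_adj mxE.
have -> : (invmx A *m C) i j = p.[0]^-1 * r.[0].
  by rewrite -invE scale0r add0r.
apply: cvg_trans (near_eq_cvg _) _.
  by near=> h; rewrite /= invE //; near: h; exact: near0_line_unitmx.
apply: cvgM; last exact: continuous_horner.
apply: cvgV; last exact: continuous_horner.
by rewrite -line_unitmx scale0r add0r.
Unshelve. all: by end_near.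
Qed.

End InverseAlongLine.

Lemma invmx_resolvent (R : comUnitRingType) m (X Y : 'M[R]_m) :
  X \in unitmx -> Y \in unitmx ->
  invmx X - invmx Y = invmx X *m (Y - X) *m invmx Y.
Proof.
move=> uX uY.
by rewrite mulmxBr mulmxBl mulmxK // mulVmx // mul1mx.
Qed.

Lemma derive_invmx_linear (R : realType) (V : normedModType R) m
    (F : V -> 'M[R]_m) (linF : linear F) m' (C : 'M[R]_(m, m')) i j a v :
  F a \in unitmx ->
  'D_v (fun x => (invmx (F x) *m C) i j) a =
    - (invmx (F a) *m F v *m invmx (F a) *m C) i j.
Proof.
move=> uA; set A := F a; set B := F v; set U := invmx A.
rewrite /derive; apply: cvg_lim; first exact: norm_hausdorff.
pose G h := - (invmx (h *: B + A) *m (B *m U *m C)) i j.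
eapply cvg_trans; first apply: (@near_eq_cvg _ _ _ _ G).
  near=> h; rewrite /G /= linF -/A -/B.
  have uAh : h *: B + A \in unitmx.
    by near: h; apply: cvg_within; exact: near0_line_unitmx.
  have h0 : h != 0 by near: h; exact: nbhs_dnbhs_neq.
  rewrite (_ : _ - _ = ((invmx (h *: B + A) - U) *m C) i j); last first.
    by rewrite mulmxBl !mxE.
  rewrite invmx_resolvent // opprD addrCA subrr addr0 -scaleNr -scalemxAr.
  rewrite -!scalemxAl !mulmxA -/U !mxE.
  by rewrite [h^-1 *: _]mulrA mulrN mulVf // mulN1r.
have -> : - (U *m B *m U *m C) i j = - (invmx A *m (B *m U *m C)) i j.
  by rewrite !mulmxA.
apply: cvg_within_filter; apply: cvgN; exact: cvg_invmx_line.
Unshelve. all: by end_near.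
Qed.

Lemma subr_sqrD1 (R : pzRingType) (x : R) : (x + 1) ^+ 2 - (- x + 1) ^+ 2 = x *+ 4.
Proof.
rewrite !sqrrD1 sqrrN mulNrn opprD addrACA subrr addr0.
by rewrite opprD addrACA subrr add0r opprK -mulrnDr.
Qed.

Section Toeplitz.
Variables (R : realType) (n : nat).
Local Notation V := 'cV[R]_n.+1.
Local Notation M := 'M[R]_n.+1.
Local Notation J := (exchange R n).
Local Notation tone := (tone R n).

Lemma hat_mxE (a : V) i j :
  hat a i j = if (i <= j)%N then a (inord (j - i)) 0 else 0.
Proof.
rewrite /hat mxE; case: leqP => hij.
  rewrite (big_pred1 (inord (j - i))) // => k /=.
  have hk := ltn_ord k; have hj := ltn_ord j.
  apply/eqP/eqP => [<-|->]; first by apply/val_inj; rewrite /= inordK; lia.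
  by rewrite /= inordK; lia.
by rewrite big_pred0 // => k; apply/eqP; lia.
Qed.

Lemma hat_row0 (a : V) k : hat a 0 k = a k 0.
Proof. by rewrite hat_mxE leq0n subn0 inord_val. Qed.

Lemma hat_is_linear : linear (@hat R n).
Proof.
move=> c a b; apply/matrixP => i j; rewrite !mxE.
under eq_bigr do rewrite !mxE.
by rewrite big_split /= mulr_sumr.
Qed.

Lemma hat_tone : hat tone = 1.
Proof.
apply/matrixP => i j; rewrite hat_mxE !mxE andbT.
case: leqP => [ij | ji]; rewrite -!val_eqE /=; last by rewrite eq_sym ltn_eqF.
by rewrite inordK ?subn_eq0 ?eqn_leq ?ij //; have := ltn_ord j; lia.
Qed.

Definition tshift : V := \col_i (i == 1 :> nat)%:R.
Local Notation N := (hat tshift).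

Lemma shift_mxE i j : N i j = (i.+1 == j)%:R.
Proof.
rewrite hat_mxE !mxE; have hj := ltn_ord j.
case: leqP => h; last by case: eqP => //; lia.
by rewrite inordK; [congr ((nat_of_bool _)%:R); apply/eqP/eqP|]; lia.
Qed.

Lemma sum_nat_eqE (c : nat) (F : 'I_n.+1 -> R) :
  \sum_(k < n.+1) (c == k)%:R * F k = if (c < n.+1)%N then F (inord c) else 0.
Proof.
case: ltnP => hc.
  rewrite (bigD1 (inord c)) //= inordK // eqxx mul1r big1 ?addr0 // => k hk.
  case: eqP => [e|]; last by rewrite mul0r.
  by move: hk; rewrite (_ : k = inord c) ?eqxx //; apply/val_inj; rewrite /= inordK.
rewrite big1 // => k _; case: eqP => [e|]; last by rewrite mul0r.
have := ltn_ord k; lia.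
Qed.

Lemma shift_mxX k : N ^+ k = \matrix_(i, j) (i + k == j)%N%:R.
Proof.
elim: k => [|k IH]; first by apply/matrixP => i j; rewrite expr0 !mxE addn0.
apply/matrixP => i j; rewrite exprSr IH -mulmxE [RHS]mxE mxE.
under eq_bigr do rewrite mxE shift_mxE.
rewrite sum_nat_eqE; case: ltnP => h; first by rewrite inordK // addnS.
by case: eqP => //; have := ltn_ord j; lia.
Qed.

Lemma hat_sum_shift (a : V) : hat a = \sum_(k < n.+1) a k 0 *: N ^+ k.
Proof.
apply/matrixP => i j; rewrite summxE; under eq_bigr do rewrite shift_mxX !mxE.
rewrite /hat mxE big_mkcond /=.
by apply: eq_bigr => k _; case: ifP; rewrite ?mulr1 ?mulr0.
Qed.

Lemma hat_comm (a b : V) : GRing.comm (hat a) (hat b).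
Proof.
have commZ (X Y : M) c : GRing.comm X Y -> GRing.comm X (c *: Y).
  by rewrite /GRing.comm -scalerAl -scalerAr => ->.
rewrite (hat_sum_shift a) (hat_sum_shift b); apply: commr_sum => l _; apply: (commZ).
apply: commr_sym; apply: commr_sum => k _; apply: (commZ).
by rewrite /GRing.comm -!exprD addnC.
Qed.

Lemma mulmx_shiftE (X : M) i j :
  (X *m N) i j = if (0 < j)%N then X i (inord j.-1) else 0.
Proof.
rewrite mxE; under eq_bigr do rewrite shift_mxE mulrC.
case: posnP => [j0|jpos].
  by rewrite big1 // => k _; rewrite j0 mul0r.
have shiftE (k : 'I_n.+1) : (k.+1 == j) = (j.-1 == k) by apply/eqP/eqP; lia.
under eq_bigr do rewrite shiftE.
by rewrite sum_nat_eqE ifT //; have := ltn_ord j; lia.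
Qed.

Lemma shift_mulmxE (X : M) i j :
  (N *m X) i j = if (i.+1 < n.+1)%N then X (inord i.+1) j else 0.
Proof. by rewrite mxE; under eq_bigr do rewrite shift_mxE; rewrite sum_nat_eqE. Qed.

Lemma comm_shift_hat (X : M) : GRing.comm N X -> X = hat (row 0 X)^T.
Proof.
move=> NX; apply/matrixP => i j; rewrite hat_mxE !mxE.
suff {i j} : forall i, (i < n.+1)%N -> forall j : 'I_n.+1,
    X (inord i) j = if (i <= j)%N then X 0 (inord (j - i)) else 0.
  by move=> /(_ i (ltn_ord i) j); rewrite inord_val.
elim=> [_ j|i IH hi j].
  by rewrite subn0 inord_val; congr (X _ _); apply/val_inj; rewrite /= inordK.
have := congr1 (fun Y : M => Y (inord i) j) NX; rewrite /= -!mulmxE.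
rewrite shift_mulmxE mulmx_shiftE inordK ?hi => [->|]; last lia.
have hj := ltn_ord j.
case: posnP => [->|jpos] //; rewrite IH ?inordK; try lia.
have -> : (i <= j.-1)%N = (i < j)%N by lia.
by have -> : (j.-1 - i = j - i.+1)%N by lia.
Qed.

Lemma exchange_mxE i j : J i j = (n - j == i)%N%:R.
Proof.
by rewrite mxE; congr ((nat_of_bool _)%:R); apply/eqP/eqP; have := ltn_ord j; lia.
Qed.

Lemma mulmx_exchangeE (X : M) i j : (X *m J) i j = X i (inord (n - j)%N).
Proof.
rewrite mxE; under eq_bigr do rewrite exchange_mxE mulrC.
by rewrite sum_nat_eqE ifT //; lia.
Qed.

Lemma trmx_exchange : J^T = J.
Proof. by apply/matrixP => i j; rewrite !mxE addnC. Qed.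

Lemma exchange_mulmxE (X : M) i j : (J *m X) i j = X (inord (n - i)%N) j.
Proof.
rewrite mxE; under eq_bigr do rewrite -trmx_exchange mxE exchange_mxE.
by rewrite sum_nat_eqE ifT //; lia.
Qed.

Lemma exchangeK : J *m J = 1.
Proof.
apply/matrixP => i j; rewrite mulmx_exchangeE exchange_mxE !mxE inordK; last lia.
by rewrite subKn 1?eq_sym // -ltnS.
Qed.

Lemma hat_persym (a : V) : hat a *m J = J *m (hat a)^T.
Proof.
apply/matrixP => i j; rewrite mulmx_exchangeE exchange_mulmxE [RHS]mxE !hat_mxE.
have hi := ltn_ord i; have hj := ltn_ord j.
rewrite !inordK; try lia.
case: leqP => h1; case: leqP => h2 //; try lia.
by have -> : (n - j - i = n - i - j)%N by lia.
Qed.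

Lemma persym_trmx (X : M) : X *m J = J *m X^T -> X^T *m J = J *m X.
Proof.
move=> /(congr1 (fun Y => J *m Y *m J)).
by rewrite /= !mulmxA exchangeK mul1mx -!mulmxA exchangeK mulmx1 => <-.
Qed.

Lemma comm_shift_persym (X : M) : GRing.comm N X -> X *m J = J *m X^T.
Proof. by move=> /comm_shift_hat ->; exact: hat_persym. Qed.

Lemma persym_mulmx_exchange_sym (X : M) : X *m J = J *m X^T -> (X *m J)^T = X *m J.
Proof. by move=> XJ; rewrite trmx_mul trmx_exchange XJ. Qed.

Lemma comm_hat_invmx (a s : V) : hat a *m invmx (hat s) = invmx (hat s) *m hat a.
Proof. exact: commrV (hat_comm a s). Qed.

Lemma derive_form_coef (L : M) j k (s : V) : hat s \in unitmx ->
  'D_(delta_mx k 0) (form_coef L j) s =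
    - (invmx (hat s) *m invmx (hat s) *m L) k j.
Proof.
move=> us.
have -> : form_coef L j = fun x => (invmx (hat x) *m L) 0 j.
  by apply/funext => x; rewrite /form_coef /tinv trmxK -row_mul mxE.
rewrite (derive_invmx_linear hat_is_linear) // -comm_hat_invmx -!mulmxA.
rewrite mxE (bigD1 k) //= big1 ?addr0 => [|m mk]; rewrite hat_row0 !mxE ?eqxx ?mul1r //.
by rewrite (negbTE mk) mul0r.
Qed.

Lemma closed_atP (L : M) (s : V) : hat s \in unitmx ->
  closed_at L s <->
  (invmx (hat s) *m invmx (hat s) *m L)^T = invmx (hat s) *m invmx (hat s) *m L.
Proof.
move=> us; split => [cl | sym j k]; rewrite ?derive_form_coef //.
  apply/matrixP => i j; rewrite mxE.
  by have := cl j i; rewrite !derive_form_coef // => /oppr_inj.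
by rewrite -[in RHS]sym [in RHS]mxE.
Qed.

Lemma hat_unitmx (s : V) : s 0 0 != 0 -> hat s \in unitmx.
Proof.
move=> s0; rewrite unitmxE -det_tr det_trig.
  rewrite (eq_bigr (fun _ => s 0 0)); last first.
    move=> i _; rewrite mxE hat_mxE leqnn subnn (_ : inord 0 = 0) //.
    by apply/val_inj; rewrite /= inordK.
  by rewrite prodr_const unitfE expf_neq0.
by apply/is_trig_mxP => i j hij; rewrite mxE hat_mxE; case: leqP => //; lia.
Qed.

Lemma ball_tone_unitmx (s : V) : ball tone 1 s -> hat s \in unitmx.
Proof.
move=> [_ /(_ 0 0)]; rewrite /ball /= !mxE eqxx /= => h.
by apply: hat_unitmx; apply: contraTneq h => ->; rewrite subr0 normr1 ltxx.
Qed.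

Lemma tinv_quadE (X : M) (s : V) :
  (s^T *m X *m tinv s) 0 0 = (hat s *m X *m (invmx (hat s))^T) 0 0.
Proof.
have -> : s^T = row 0 (hat s).
  by apply/matrixP => i m; rewrite (ord1 i) [LHS]mxE [RHS]mxE hat_row0.
rewrite /tinv tr_row -row_mul -row_mul [LHS]mxE [LHS]mxE [RHS]mxE.
by apply: eq_bigr => m _; rewrite [col _ _ _ _]mxE.
Qed.

Lemma tone_dot : (tone^T *m tone) 0 0 = 1.
Proof.
rewrite mxE (bigD1 0) //= !mxE eqxx /= mulr1 big1 ?addr0 // => m hm.
by rewrite !mxE (negbTE hm) mul0r.
Qed.

Lemma persym_invmx_hat (s : V) :
  invmx (hat s) *m J = J *m (invmx (hat s))^T.
Proof. exact/comm_shift_persym/commrV/hat_comm. Qed.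

Lemma toeplitz_exchange_normalized (t : V) : hat t 0 ord_max != 0 ->
  normalized_uncurling ((hat t 0 ord_max)^-1 *: (hat t *m J)).
Proof.
move=> ct; split; first split.
- by rewrite linearZ /= persym_mulmx_exchange_sym // hat_persym.
- exists 1; split => //; split => [s /ball_tone_unitmx // | s /ball_tone_unitmx us].
  apply/closed_atP => //; rewrite -!scalemxAr linearZ /= !mulmxA; congr (_ *: _).
  apply/persym_mulmx_exchange_sym/comm_shift_persym.
  have NU : GRing.comm N (invmx (hat s)) by exact/commrV/hat_comm.
  by apply: commrM; [apply: commrM | exact: hat_comm].
- apply/nbhs_ballP; exists 1 => //= s /ball_tone_unitmx us.
  rewrite tinv_quadE tone_dot -scalemxAr -scalemxAl mxE -!mulmxA -persym_invmx_hat.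
  rewrite !mulmxA -(mulmxA (hat s)) comm_hat_invmx mulmxA mulmxV // mul1mx.
  rewrite mulmx_exchangeE subn0 (_ : inord n = ord_max) ?mulVf //.
  by apply/val_inj; rewrite /= inordK.
Qed.

Lemma closed_at_sqr_sym (L : M) (s : V) :
  L^T = L -> hat s \in unitmx -> closed_at L s ->
  hat s ^+ 2 *m L = L *m (hat s ^+ 2)^T.
Proof.
move=> LT us /closed_atP-/(_ us); set U := invmx (hat s).
rewrite trmx_mul LT => sym.
have AU : hat s ^+ 2 *m (U *m U) = 1%:M.
  by rewrite expr2 -mulmxE mulmxA -(mulmxA (hat s) (hat s) U) mulmxV // mulmx1 mulmxV.
rewrite -[LHS]mulmx1 -trmx1 -AU trmx_mul mulmxA -(mulmxA _ L) sym.
by rewrite !mulmxA -(mulmxA _ U U) AU mul1mx.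
Qed.

Lemma uncurling_shift (L : M) : uncurling L -> N *m L = L *m N^T.
Proof.
case=> LT [r [r0 [unit_r closed_r]]].
have sqr_sym h : `|h| < r -> (h *: N + 1) ^+ 2 *m L = L *m ((h *: N + 1) ^+ 2)^T.
  move=> hr; have hs : hat (h *: tshift + tone) = h *: N + 1.
    by rewrite hat_is_linear hat_tone.
  have near_tone : ball tone r (h *: tshift + tone).
    split => // i j; rewrite /ball /= !mxE opprD addrCA subrr addr0 normrN normrM.
    by case: (i == 1 :> nat); rewrite ?normr1 ?mulr1 ?normr0 ?mulr0.
  by rewrite -hs; apply: closed_at_sqr_sym => //; [apply: unit_r | apply: closed_r].
(* The conditions at [h] and [-h] differ by a multiple of [N *m L - L *m N^T]. *)
pose h := r / 2; have hpos : 0 < h by rewrite /h; lra.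
have hr : `|h| < r by rewrite ger0_norm /h; lra.
have := sqr_sym h hr; have := sqr_sym (- h); rewrite normrN => /(_ hr) Em Ep.
have : (h *: N) *+ 4 *m L = L *m ((h *: N) *+ 4)^T.
  by rewrite -subr_sqrD1 mulmxBl linearB /= mulmxBr Ep -scaleNr Em.
rewrite -scaler_nat scalerA -scalemxAl linearZ /= -scalemxAr.
by apply: scalerI; rewrite mulf_neq0 ?pnatr_eq0 ?lt0r_neq0.
Qed.

Lemma normalized_uncurling_toeplitz_exchange (L : M) : normalized_uncurling L ->
  exists t : V, hat t 0 ord_max != 0 /\ L = (hat t 0 ord_max)^-1 *: (hat t *m J).
Proof.
case=> unc /nbhs_singleton.
rewrite tinv_quadE tone_dot hat_tone invmx1 trmx1 mulmx1 mul1mx => L00.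
have NLJ : GRing.comm N (L *m J).
  rewrite /GRing.comm -!mulmxE mulmxA uncurling_shift // -!mulmxA.
  by rewrite persym_trmx ?hat_persym.
exists (row 0 (L *m J))^T.
have -> : hat (row 0 (L *m J))^T 0 ord_max = 1.
  rewrite hat_row0 mxE mxE mulmx_exchangeE subnn -L00.
  by congr (L _ _); apply/val_inj; rewrite /= inordK.
rewrite invr1 scale1r oner_neq0; split => //.
by rewrite -(comm_shift_hat NLJ) -mulmxA exchangeK mulmx1.
Qed.

End Toeplitz.

Theorem corollary10p5 (R : realType) (n : nat) :
  (forall t : 'cV[R]_n.+1, hat t 0 ord_max != 0 ->
     normalized_uncurling ((hat t 0 ord_max)^-1 *: (hat t *m exchange R n))) /\
  (forall L : 'M[R]_n.+1, normalized_uncurling L ->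
     exists t : 'cV[R]_n.+1, hat t 0 ord_max != 0 /\
       L = (hat t 0 ord_max)^-1 *: (hat t *m exchange R n)).
Proof.
split; first exact: toeplitz_exchange_normalized.
exact: normalized_uncurling_toeplitz_exchange.
Qed.
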